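(* Let $M$ be a finite abelian group of exponent greater than $2$. Let $f'\in\mathrm{Aut}(K)$, $f''\in\mathrm{Aut}(M)$, and $u,v\in M$ with $u^2=v^2=1$. Then $F^+_{(f',f'',u,v)}$ is an automorphism of $L_M$ and $F^-_{(f',f'',u,v)}$ is a proper half-automorphism of $L_M$.
   Context: Let $K=\{1,a,b,c\}$ be the Klein four-group. Set $L_M=K\times M$ with the operation $(A,x)*(B,y)=(AB,xy)$ if $B=1$, and $(A,x)*(B,y)=(AB,x^{-1}y)$ if $B\neq 1$. For $u,v\in M$ with $u^2=v^2=1$, $\alpha_{(u,v)}:K\to M$ is defined by $\alpha_{(u,v)}(1)=1$, $\alpha_{(u,v)}(a)=u$, $\alpha_{(u,v)}(b)=v$, $\alpha_{(u,v)}(c)=uv$. For $f'\in\mathrm{Aut}(K)$, $f''\in\mathrm{Aut}(M)$ define $F^+_{(f',f'',u,v)}(A,x)=(f'(A),f''(x)\alpha_{(u,v)}(A))$ for all $(A,x)\in L_M$, and $F^-_{(f',f'',u,v)}(1,x)=(1,f''(x))$, $F^-_{(f',f'',u,v)}(A,x)=(f'(A),f''(x^{-1})\alpha_{(u,v)}(A))$ for $A\neq 1$. A half-automorphism of a loop $L$ is a bijection $f:L\to L$ with $f(XY)\in\{f(X)f(Y),f(Y)f(X)\}$ for all $X,Y$; it is proper if it is neither an automorphism nor an anti-automorphism. *)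

From mathcomp Require Import all_boot all_fingroup all_solvable.
Set Implicit Arguments. Unset Strict Implicit. Unset Printing Implicit Defensive.
Local Open Scope group_scope.

Inductive Klein := K1 | Ka | Kb | Kc.

Definition kmul (A B : Klein) : Klein :=
  match A, B with
  | K1, X | X, K1 => X
  | Ka, Ka | Kb, Kb | Kc, Kc => K1
  | Ka, Kb | Kb, Ka => Kc
  | Ka, Kc | Kc, Ka => Kb
  | Kb, Kc | Kc, Kb => Ka
  end.

Definition klein_aut (f : Klein -> Klein) : Prop :=
  bijective f /\ forall A B, f (kmul A B) = kmul (f A) (f B).

Definition group_aut (M : finGroupType) (f : M -> M) : Prop :=
  bijective f /\ forall x y : M, f (x * y) = f x * f y.

Definition LMmul (M : finGroupType) (X Y : Klein * M) : Klein * M :=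
  match Y.1 with
  | K1 => (kmul X.1 Y.1, X.2 * Y.2)
  | _ => (kmul X.1 Y.1, X.2^-1 * Y.2)
  end.

Definition alpha (M : finGroupType) (u v : M) (A : Klein) : M :=
  match A with K1 => 1 | Ka => u | Kb => v | Kc => u * v end.

Definition Fplus (M : finGroupType) (f' : Klein -> Klein) (f'' : M -> M)
  (u v : M) (X : Klein * M) : Klein * M :=
  (f' X.1, f'' X.2 * alpha u v X.1).

Definition Fminus (M : finGroupType) (f' : Klein -> Klein) (f'' : M -> M)
  (u v : M) (X : Klein * M) : Klein * M :=
  match X.1 with
  | K1 => (K1, f'' X.2)
  | A => (f' A, f'' (X.2^-1) * alpha u v A)
  end.

Definition is_automorphism (T : Type) (op : T -> T -> T) (f : T -> T) : Prop :=
  bijective f /\ forall X Y, f (op X Y) = op (f X) (f Y).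

Definition is_anti_automorphism (T : Type) (op : T -> T -> T) (f : T -> T) : Prop :=
  bijective f /\ forall X Y, f (op X Y) = op (f Y) (f X).

Definition is_half_automorphism (T : Type) (op : T -> T -> T) (f : T -> T) : Prop :=
  bijective f /\ forall X Y, f (op X Y) = op (f X) (f Y) \/ f (op X Y) = op (f Y) (f X).

Definition is_proper_half_automorphism (T : Type) (op : T -> T -> T) (f : T -> T) : Prop :=
  is_half_automorphism op f /\ ~ is_automorphism op f /\ ~ is_anti_automorphism op f.

From mathcomp Require Import all_boot all_fingroup all_solvable.
Set Implicit Arguments. Unset Strict Implicit.
Local Open Scope group_scope.

(* F^- is F^+ composed with the map J fixing the coset {1} x M and inverting
   the second coordinate on the other three cosets. Since F^+ is an
   automorphism, F^- is a proper half-automorphism exactly when J is one. In an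
   abelian M, J preserves every product up to the order of the factors, while
   an element x with x^-1 <> x (which exists as the exponent exceeds 2) shows
   that J respects neither the products nor the reversed products. *)

Section MagmaMorphisms.

Variables (T : Type) (op : T -> T -> T).

Lemma half_automorphism_comp (F J : T -> T) :
  is_automorphism op F -> is_half_automorphism op J ->
  is_half_automorphism op (F \o J).
Proof.
move=> [bijF mF] [bijJ mJ]; split; first exact: bij_comp.
by move=> X Y /=; case: (mJ X Y) => ->; rewrite mF; [left | right].
Qed.

Section CancelAutomorphism.

Variables F J G : T -> T.
Hypotheses (autF : is_automorphism op F) (eqG : forall X, G X = F (J X)).

Lemma bijective_cancel_automorphism : bijective G -> bijective J.
Proof.
case=> H GK KG; have injF := bij_inj autF.1.
by exists (H \o F) => X /=; [rewrite -eqG GK | apply: injF; rewrite -eqG KG].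
Qed.

Lemma automorphism_cancel : is_automorphism op G -> is_automorphism op J.
Proof.
move=> [bijG mG]; split; first exact: bijective_cancel_automorphism.
by move=> X Y; apply: (bij_inj autF.1); rewrite autF.2 -!eqG mG.
Qed.

Lemma anti_automorphism_cancel :
  is_anti_automorphism op G -> is_anti_automorphism op J.
Proof.
move=> [bijG mG]; split; first exact: bijective_cancel_automorphism.
by move=> X Y; apply: (bij_inj autF.1); rewrite autF.2 -!eqG mG.
Qed.

End CancelAutomorphism.

Lemma proper_half_automorphism_comp (F J G : T -> T) :
  is_automorphism op F -> is_proper_half_automorphism op J ->
  (forall X, G X = F (J X)) -> is_proper_half_automorphism op G.
Proof.
move=> autF [halfJ [nautJ nantiJ]] eqG.
have [bijFJ mFJ] := half_automorphism_comp autF halfJ.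
split; [split | split].
- by apply: (eq_bij bijFJ) => X; rewrite eqG.
- by move=> X Y; rewrite !eqG; exact: mFJ.
- by move/(automorphism_cancel autF eqG).
- by move/(anti_automorphism_cancel autF eqG).
Qed.

End MagmaMorphisms.

Lemma kmulr1 (A : Klein) : kmul A K1 = A. Proof. by case: A. Qed.
Lemma kmulxx (A : Klein) : kmul A A = K1. Proof. by case: A. Qed.

Lemma kmul_eq1 (A B : Klein) : kmul A B = K1 -> A = B.
Proof. by case: A; case: B. Qed.

Lemma klein_eq1VN (A : Klein) : A = K1 \/ A <> K1.
Proof. by case: A; [left | right..]. Qed.

Section KleinAutomorphism.

Variable f : Klein -> Klein.
Hypothesis autf : klein_aut f.

Lemma klein_aut1 : f K1 = K1.
Proof. by have := autf.2 K1 K1; case: (f K1). Qed.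

Lemma klein_aut_neq1 (A : Klein) : A <> K1 -> f A <> K1.
Proof.
move=> nA1 fA1; apply: nA1; apply: (bij_inj autf.1).
by rewrite fA1 klein_aut1.
Qed.

End KleinAutomorphism.

Section GroupAutomorphism.

Variables (M : finGroupType) (f : M -> M).
Hypothesis autf : group_aut f.

Lemma group_aut1 : f 1 = 1.
Proof. by apply: (mulgI (f 1)); rewrite -autf.2 !mulg1. Qed.

Lemma group_autV (x : M) : f x^-1 = (f x)^-1.
Proof. by apply: (mulgI (f x)); rewrite mulgV -autf.2 mulgV group_aut1. Qed.

End GroupAutomorphism.

Lemma exists_invg_neq (M : finGroupType) :
  (2 < exponent [set: M])%N -> exists x : M, x^-1 != x.
Proof.
move=> exp_gt2; apply/existsP; apply: contraLR exp_gt2 => /existsPn invK.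
rewrite -leqNgt; apply: dvdn_leq => //; apply/exponentP => x _.
by rewrite expg2 -{1}(eqP (negbNE (invK x))) mulVg.
Qed.

Section LoopLM.

Variable M : finGroupType.
Hypothesis Mab : abelian [set: M].

Let mulgC (x y : M) : x * y = y * x.
Proof. exact: (centsP Mab) x (in_setT x) y (in_setT y). Qed.

Lemma LMmulK1 (X : Klein * M) (y : M) : LMmul X (K1, y) = (X.1, X.2 * y).
Proof. by rewrite /LMmul /= kmulr1. Qed.

Lemma LMmulN1 (X : Klein * M) (B : Klein) (y : M) :
  B <> K1 -> LMmul X (B, y) = (kmul X.1 B, X.2^-1 * y).
Proof. by case: B. Qed.

Section Alpha.

Variables u v : M.
Hypotheses (u2 : u ^+ 2 = 1) (v2 : v ^+ 2 = 1).

Lemma alphaM (A B : Klein) : alpha u v (kmul A B) = alpha u v A * alpha u v B.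
Proof.
have uu : u * u = 1 by rewrite -expg2.
have vv : v * v = 1 by rewrite -expg2.
have uvu : u * v * u = v by rewrite mulgC mulgA uu mul1g.
have uvv : u * v * v = u by rewrite -mulgA vv mulg1.
have vuv : v * u * v = u by rewrite (mulgC v) uvv.
have uvuv : u * v * u * v = 1 by rewrite uvu vv.
by case: A; case: B;
  rewrite /= ?mulg1 ?mul1g ?mulgA ?uu ?vv ?mul1g ?uvu ?uvv ?vuv ?uvuv.
Qed.

Lemma alphaV (A : Klein) : (alpha u v A)^-1 = alpha u v A.
Proof. by apply/eqP; rewrite eq_invg_mul -alphaM kmulxx. Qed.

End Alpha.

Definition twist (X : Klein * M) : Klein * M :=
  match X.1 with K1 => X | A => (A, X.2^-1) end.

Lemma twistK1 (x : M) : twist (K1, x) = (K1, x).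
Proof. by []. Qed.

Lemma twistN1 (A : Klein) (x : M) : A <> K1 -> twist (A, x) = (A, x^-1).
Proof. by case: A. Qed.

Lemma twist_involutive : involutive twist.
Proof. by case=> [[] x] //=; rewrite /twist /= invgK. Qed.

Lemma twist_half_automorphism : is_half_automorphism (@LMmul M) twist.
Proof.
split; first exact/inv_bij/twist_involutive.
move=> [A x] [B y].
have [->|nA1] := klein_eq1VN A; have [->|nB1] := klein_eq1VN B.
- by left.
- right; rewrite LMmulN1 //= twistK1 !twistN1 // LMmulK1 /=.
  by rewrite invMg invgK.
- right; rewrite LMmulK1 twistK1 !twistN1 // LMmulN1 //=.
  by rewrite invMg.
have [AB1|nAB1] := klein_eq1VN (kmul A B).
- right; move/kmul_eq1: AB1 => eAB; subst B.
  rewrite LMmulN1 //= kmulxx twistK1 !twistN1 // LMmulN1 //=.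
  by rewrite kmulxx invgK mulgC.
- left; rewrite LMmulN1 //= twistN1 // !twistN1 // LMmulN1 //=.
  by rewrite invMg invgK mulgC.
Qed.

Lemma twist_not_automorphism (x : M) :
  x^-1 != x -> ~ is_automorphism (@LMmul M) twist.
Proof.
move=> /eqP nxV [_ mtwist]; apply: nxV.
have := mtwist (K1, x) (Ka, 1).
by rewrite /twist /LMmul /= invg1 !mulg1 invgK => -[<-].
Qed.

Lemma twist_not_anti_automorphism (x : M) :
  x^-1 != x -> ~ is_anti_automorphism (@LMmul M) twist.
Proof.
move=> /eqP nxV [_ mtwist]; apply: nxV.
have := mtwist (Ka, x) (Kb, 1).
by rewrite /twist /LMmul /= mulg1 !invgK mul1g => -[<-].
Qed.

Lemma twist_proper_half_automorphism :
  (2 < exponent [set: M])%N -> is_proper_half_automorphism (@LMmul M) twist.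
Proof.
move=> /exists_invg_neq [x nxV].
split; [exact: twist_half_automorphism | split].
- exact: twist_not_automorphism nxV.
- exact: twist_not_anti_automorphism nxV.
Qed.

Section Fplus.

Variables (f' : Klein -> Klein) (f'' : M -> M) (u v : M).
Hypotheses (autf' : klein_aut f') (autf'' : group_aut f'').
Hypotheses (u2 : u ^+ 2 = 1) (v2 : v ^+ 2 = 1).

Lemma Fplus_bijective : bijective (Fplus f' f'' u v).
Proof.
case: autf'.1 => g' f'K g'K; case: autf''.1 => g'' f''K g''K.
exists (fun Y => (g' Y.1, g'' (Y.2 * (alpha u v (g' Y.1))^-1))).
  by case=> A x; rewrite /Fplus /= f'K mulgK f''K.
by case=> A x; rewrite /Fplus /= g'K g''K mulgKV.
Qed.

Lemma Fplus_automorphism : is_automorphism (@LMmul M) (Fplus f' f'' u v).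
Proof.
split; first exact: Fplus_bijective.
move=> [A x] [B y]; have [->|nB1] := klein_eq1VN B.
  rewrite LMmulK1 /Fplus /= (klein_aut1 autf') LMmulK1 /= autf''.2 mulg1.
  by rewrite -!mulgA (mulgC (alpha u v A)).
rewrite LMmulN1 // /Fplus /= LMmulN1; last exact: klein_aut_neq1.
rewrite -autf'.2 (alphaM u2 v2) autf''.2 (group_autV autf'').
rewrite invMg (alphaV u2 v2); congr pair; rewrite !mulgA; congr (_ * _).
by rewrite -(mulgA (alpha u v A)) [RHS]mulgC.
Qed.

Lemma Fminus_twist (X : Klein * M) :
  Fminus f' f'' u v X = Fplus f' f'' u v (twist X).
Proof.
by case: X => [[] x]; rewrite /Fminus /Fplus /= ?(klein_aut1 autf') ?mulg1.
Qed.

End Fplus.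

End LoopLM.

Theorem proposition4p10 (M : finGroupType)
  (Mab : abelian [set: M]) (Mexp : (2 < exponent [set: M])%N)
  (f' : Klein -> Klein) (hf' : klein_aut f')
  (f'' : M -> M) (hf'' : group_aut f'')
  (u v : M) (hu : u ^+ 2 = 1) (hv : v ^+ 2 = 1) :
  is_automorphism (@LMmul M) (Fplus f' f'' u v) /\
  is_proper_half_automorphism (@LMmul M) (Fminus f' f'' u v).
Proof.
have autFplus := Fplus_automorphism Mab hf' hf'' hu hv.
split; first exact: autFplus.
apply: (proper_half_automorphism_comp autFplus).
  exact: twist_proper_half_automorphism.
exact: Fminus_twist.
Qed.
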